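(* Let $X$ be a proper geodesic metric space. For any $r\ge C>0$ and $M>0$ there exist $\hat r=\hat r(r,C,M)>0$ and $L_0=L_0(r,C,M)>0$ with the following property. Let $\alpha,\beta$ be geodesics with $d(\alpha^-,\beta^-)\le M$ and $d(\alpha^+,\beta^+)\le M$, and let $p$ be a $C$-contracting geodesic segment of length at least $L_0$. If $d(p^-,\alpha)\le r$ and $d(p^+,\alpha)\le r$, then $d(p^-,\beta)\le\hat r$ and $d(p^+,\beta)\le\hat r$.
   Context: $\gamma^-,\gamma^+$ denote the initial and terminal points of a path $\gamma$. $\pi_A$ is nearest-point projection; a closed $U$ is $C$-contracting if every geodesic $\gamma$ with $d(\gamma,U)\ge C$ satisfies $\mathrm{diam}(\pi_U(\gamma))\le C$. *)

From HB Require Import structures.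
From mathcomp Require Import all_boot all_order all_algebra.
From mathcomp Require Import classical_sets boolp reals.
From Stdlib Require List.
Set Implicit Arguments. Unset Strict Implicit. Unset Printing Implicit Defensive.
Import Order.TTheory GRing.Theory Num.Theory.
Local Open Scope ring_scope.
Local Open Scope classical_set_scope.

(* A path parametrised on [0, plen] (plen >= 0 for geodesics). *)
Record gpath (R : realType) (X : Type) := Path { plen : R; pmap : R -> X }.

Section Defs.
Context {R : realType} {X : Type} (d : X -> X -> R).

Definition is_metric : Prop :=
  [/\ (forall x y, 0 <= d x y), (forall x y, d x y = 0 <-> x = y),
      (forall x y, d x y = d y x) & (forall x y z, d x z <= d x y + d y z)].

Definition mopen (U : set X) : Prop :=
  forall x, U x -> exists2 e : R, 0 < e & forall y, d x y < e -> U y.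

Definition mclosed (A : set X) : Prop := mopen (~` A).

Definition mcompact (K : set X) : Prop :=
  forall (I : Type) (U : I -> set X), (forall i, mopen (U i)) ->
    K `<=` (fun x => exists i, U i x) ->
    exists s : list I, K `<=` (fun x => exists2 i, List.In i s & U i x).

Definition cball (x : X) (r : R) : set X := [set y | d x y <= r].

Definition proper_space : Prop := forall x r, mcompact (cball x r).

Definition gstart (g : gpath R X) : X := pmap g 0.
Definition gterm (g : gpath R X) : X := pmap g (plen g).
Definition gimage (g : gpath R X) : set X :=
  [set x | exists2 t, 0 <= t <= plen g & x = pmap g t].

Definition is_geodesic (g : gpath R X) : Prop :=
  0 <= plen g /\
  forall s t, 0 <= s <= plen g -> 0 <= t <= plen g ->
    d (pmap g s) (pmap g t) = `|s - t|.

Definition geodesic_space : Prop :=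
  forall x y, exists g, [/\ is_geodesic g, gstart g = x & gterm g = y].

Definition dist_pt (x : X) (A : set X) : R := inf [set d x a | a in A].
Definition dist_set (A B : set X) : R := inf [set d a b | a in A & b in B].

Definition proj (U : set X) (x : X) : set X := [set u | U u /\ d x u = dist_pt x U].
Definition proj_set (U A : set X) : set X := \bigcup_(x in A) proj U x.

Definition diam_le (S : set X) (c : R) : Prop :=
  forall a b, S a -> S b -> d a b <= c.

Definition contracting (C : R) (U : set X) : Prop :=
  mclosed U /\
  forall g, is_geodesic g -> C <= dist_set (gimage g) U ->
    diam_le (proj_set U (gimage g)) C.

End Defs.

(* Write q_z for a nearest-point projection of z to p.  A geodesic that stays
   C-far from p has a projection of diameter at most C; otherwise it enters the
   C-neighbourhood of p within 4C of the projection of its starting point.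
   Together these make the projection coarsely 1-Lipschitz:
   d(q_y, q_z) <= d(y, z) + 8C.
   Orient alpha so that its point a1 near p^- precedes its point a2 near p^+.
   Then the start of alpha projects within 4r of p^- and its end within 4r of
   p^+, so the endpoints of beta project within 4r + M + 8C of p^- and p^+.
   Once p is longer than twice that plus C, beta cannot stay C-far from p, so it
   enters the neighbourhood of p near p^- (and, read backwards, near p^+). *)

From Pilot Require Import Defs.
From mathcomp Require Import all_boot all_order all_algebra.
From mathcomp Require Import classical_sets reals.
From mathcomp Require Import topology normedtype derive.
From mathcomp Require Import lra.
Import Order.TTheory GRing.Theory Num.Theory.
Import numFieldNormedType.Exports.
Local Open Scope ring_scope.
Local Open Scope classical_set_scope.

Lemma lipschitz_EVT_min {R : realType} {f : R -> R} {a b : R} : a <= b ->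
  {in `[a, b]%R &, forall s t, `|f s - f t| <= `|s - t|} ->
  exists2 c, c \in `[a, b]%R & forall t, t \in `[a, b]%R -> f c <= f t.
Proof.
move=> ab f_lip; apply: EVT_min => //; apply/subspace_continuousP => x xab.
apply/cvgrPdist_lt => e e0; apply/nbhs_normP; exists e => //= y xye yab.
by apply: le_lt_trans xye; apply: f_lip; rewrite inE.
Qed.

Section Paths.
Context {R : realType} {X : Type}.

Definition rev_gpath (g : gpath R X) : gpath R X :=
  Path (plen g) (fun t => Defs.pmap g (plen g - t)).

Lemma gimage_rev (g : gpath R X) : gimage (rev_gpath g) = gimage g.
Proof.
apply/seteqP; split => _ [t /andP[t0 tg] ->] /=.
  by exists (plen g - t) => //; apply/andP; split; lra.
by exists (plen g - t); [apply/andP; split; lra | rewrite /= subKr].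
Qed.

Lemma gstart_rev (g : gpath R X) : gstart (rev_gpath g) = gterm g.
Proof. by rewrite /gstart /gterm /= subr0. Qed.

Lemma gterm_rev (g : gpath R X) : gterm (rev_gpath g) = gstart g.
Proof. by rewrite /gstart /gterm /= subrr. Qed.

Lemma gimage_pmap (g : gpath R X) (t : R) :
  0 <= t <= plen g -> gimage g (Defs.pmap g t).
Proof. by exists t. Qed.

Lemma gimage_gstart {g : gpath R X} : 0 <= plen g -> gimage g (gstart g).
Proof. by move=> g0; apply: gimage_pmap; rewrite lexx g0. Qed.

Lemma gimage_gterm {g : gpath R X} : 0 <= plen g -> gimage g (gterm g).
Proof. by move=> g0; apply: gimage_pmap; rewrite lexx g0. Qed.

Lemma rev_gpath_geodesic {d : X -> X -> R} {g : gpath R X} :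
  is_geodesic d g -> is_geodesic d (rev_gpath g).
Proof.
move=> [g0 g_iso]; split => //= s t /andP[s0 sg] /andP[t0 tg].
rewrite g_iso; last 2 first.
- by apply/andP; split; lra.
- by apply/andP; split; lra.
by rewrite opprB addrC addrA subrK distrC.
Qed.

End Paths.

Definition between {R : realType} {X : Type} (d : X -> X -> R) (a b c : X) :=
  d a c = d a b + d b c.

Section Metric.
Context {R : realType} {X : Type} {d : X -> X -> R}.
Hypothesis d_metric : is_metric d.

Lemma metric_ge0 x y : 0 <= d x y. Proof. by case: d_metric. Qed.

Lemma metricC x y : d x y = d y x. Proof. by case: d_metric. Qed.

Lemma metric_triangle x y z : d x z <= d x y + d y z.
Proof. by case: d_metric. Qed.

Lemma between_sym {a b c : X} : between d a b c -> between d c b a.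
Proof. by rewrite /between (metricC c) (metricC c b) (metricC b a) addrC. Qed.

Lemma dist_pt_le {A : set X} x a : A a -> dist_pt d x A <= d x a.
Proof.
move=> Aa; apply: ge_inf; last by exists a.
by exists 0 => _ [b _ <-]; apply: metric_ge0.
Qed.

Lemma le_dist_pt {A : set X} {x : X} {c : R} : A !=set0 ->
  (forall a, A a -> c <= d x a) -> c <= dist_pt d x A.
Proof.
move=> [a Aa] cA; apply: lb_le_inf; first by exists (d x a), a.
by move=> _ [b Ab <-]; apply: cA.
Qed.

Lemma dist_pt_triangle {A : set X} x y : A !=set0 ->
  dist_pt d x A <= d x y + dist_pt d y A.
Proof.
move=> A0; rewrite -lerBlDl; apply: le_dist_pt => // a Aa.
by rewrite lerBlDl (le_trans (dist_pt_le x a Aa) (metric_triangle x y a)).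
Qed.

Lemma proj_le {A : set X} {x q a : X} : proj d A x q -> A a -> d x q <= d x a.
Proof. by move=> [_ ->]; apply: dist_pt_le. Qed.

Lemma le_dist_set {A B : set X} {c : R} : A !=set0 -> B !=set0 ->
  (forall a, A a -> c <= dist_pt d a B) -> c <= dist_set d A B.
Proof.
move=> [a Aa] [b Bb] cA; apply: lb_le_inf.
  by exists (d a b), a => //; exists b.
move=> _ [a' Aa' [b' Bb' <-]].
exact: le_trans (cA a' Aa') (dist_pt_le a' b' Bb').
Qed.

Lemma dist_set_lt {A B : set X} {c : R} : A !=set0 -> B !=set0 ->
  dist_set d A B < c -> exists2 a, A a & dist_pt d a B < c.
Proof.
move=> [a Aa] [b Bb] /(inf_lt _) [|_ [a' Aa' [b' Bb' <-]] ab'c].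
  by exists (d a b), a => //; exists b.
by exists a' => //; exact: le_lt_trans (dist_pt_le a' b' Bb') ab'c.
Qed.

Lemma between_proj_le {a0 a1 a2 x q y : X} {r : R} :
  between d a0 a1 a2 -> between d x q y -> d a0 q <= d a0 x ->
  d x a1 <= r -> d y a2 <= r -> d x q <= 4 * r.
Proof.
rewrite /between => a012 xqy a0q xa1 ya2.
have := metric_triangle a0 q a2; have := metric_triangle q y a2.
have := metric_triangle a0 a1 x; have := metric_triangle x a1 y.
have := metric_triangle a1 a2 y; rewrite (metricC a1 x) (metricC a2 y).
lra.
Qed.

Section Geodesic.
Context {g : gpath R X}.
Hypothesis g_geodesic : is_geodesic d g.

Lemma gpath_ge0 : 0 <= plen g. Proof. by case: g_geodesic. Qed.

Lemma gimage_neq0 : gimage g !=set0.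
Proof. by exists (gstart g); apply/gimage_gstart/gpath_ge0. Qed.

Lemma geodesic_dist (s t : R) : 0 <= s -> s <= t -> t <= plen g ->
  d (Defs.pmap g s) (Defs.pmap g t) = t - s.
Proof.
move=> s0 st tg; have [_ ->] := g_geodesic; last 2 first.
- by apply/andP; split; lra.
- by apply/andP; split; lra.
by rewrite distrC ger0_norm // subr_ge0.
Qed.

Lemma geodesic_between (s t u : R) :
  0 <= s -> s <= t -> t <= u -> u <= plen g ->
  between d (Defs.pmap g s) (Defs.pmap g t) (Defs.pmap g u).
Proof.
move=> s0 st tu ug; rewrite /between !geodesic_dist //; lra.
Qed.

Lemma dist_gstart_gterm : d (gstart g) (gterm g) = plen g.
Proof. by rewrite geodesic_dist ?subr0 ?gpath_ge0. Qed.

Lemma between_gimage {q : X} : gimage g q -> between d (gstart g) q (gterm g).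
Proof. by move=> [t /andP[t0 tg] ->]; apply: geodesic_between. Qed.

Lemma gimage_dist_le {a b : X} : gimage g a -> gimage g b -> d a b <= plen g.
Proof.
move=> [s /andP[s0 sg] ->] [t /andP[t0 tg] ->].
have [st|ts] := leP s t; first by rewrite geodesic_dist //; lra.
by rewrite metricC geodesic_dist //; lra.
Qed.

Lemma geodesic_proj y :
  exists2 t : R, 0 <= t <= plen g & proj d (gimage g) y (Defs.pmap g t).
Proof.
pose f t := d y (Defs.pmap g t).
have f_lip : {in `[0, plen g]%R &, forall s t, `|f s - f t| <= `|s - t|}.
  move=> s t; rewrite !in_itv /= => sg tg.
  rewrite -(g_geodesic.2 s t) // ler_distl /f.
  have := metric_triangle y (Defs.pmap g s) (Defs.pmap g t).
  have := metric_triangle y (Defs.pmap g t) (Defs.pmap g s).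
  rewrite (metricC (Defs.pmap g t)); move=> ? ?; apply/andP; split; lra.
have [t + f_min] := lipschitz_EVT_min gpath_ge0 f_lip; rewrite in_itv /= => tg.
exists t => //; split; first exact: gimage_pmap.
apply/le_anti/andP; split; last exact/dist_pt_le/gimage_pmap.
apply: le_dist_pt => [|_ [u ug ->]]; first exact: gimage_neq0.
by apply: f_min; rewrite in_itv.
Qed.

Lemma geodesic_prefix {s : R} : 0 <= s <= plen g ->
  is_geodesic d (Path s (Defs.pmap g)).
Proof.
move=> /andP[s0 sg]; split => //= u v /andP[u0 us] /andP[v0 vs].
by case: g_geodesic => _ -> //; apply/andP; split; lra.
Qed.

(* [t0] is the infimum of the times at which [g] is [c]-close to [A]; the bound
   [2 * c] at [t0] avoids a continuity argument. *)
Lemma first_entry {A : set X} {c : R} : A !=set0 -> 0 < c ->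
  dist_set d (gimage g) A < c ->
  exists t0 : R, [/\ 0 <= t0 <= plen g,
    forall u : R, 0 <= u -> u < t0 -> c <= dist_pt d (Defs.pmap g u) A &
    dist_pt d (Defs.pmap g t0) A < 2 * c].
Proof.
move=> A0 c0 /(dist_set_lt gimage_neq0 A0) [_ [t /andP[t0 tg] ->] tA].
pose S := [set u | 0 <= u <= plen g /\ dist_pt d (Defs.pmap g u) A < c].
have S_inf : has_inf S.
  by split; [exists t; split => //; apply/andP | exists 0 => u [/andP[]]].
have [t1 St1 t1_lt] := inf_adherent c0 S_inf.
have [/andP[t10 t1g] t1A] := St1.
have inf_t1 : inf S <= t1 by apply: (ge_inf S_inf.2).
have inf0 : 0 <= inf S by apply: (lb_le_inf S_inf.1) => u [/andP[]].
exists (inf S); split.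
- by apply/andP; split; lra.
- move=> u u0 u_inf; rewrite leNgt; apply/negP => uA.
  have : inf S <= u.
    by apply: (ge_inf S_inf.2); split => //; apply/andP; split; lra.
  lra.
- have := dist_pt_triangle (Defs.pmap g (inf S)) (Defs.pmap g t1) A0.
  rewrite geodesic_dist //; lra.
Qed.

End Geodesic.

Section Contracting.
Context {C : R} {p : gpath R X}.
Hypotheses (C_gt0 : 0 < C) (p_geodesic : is_geodesic d p)
  (p_contracting : contracting d C (gimage p)).

Lemma contracting_proj_ends_le {g : gpath R X} {qs qt : X} : is_geodesic d g ->
  C <= dist_set d (gimage g) (gimage p) ->
  proj d (gimage p) (gstart g) qs -> proj d (gimage p) (gterm g) qt ->
  d qs qt <= C.
Proof.
move=> g_geodesic far qs_proj qt_proj.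
apply: (p_contracting.2 _ g_geodesic far).
- by exists (gstart g); first exact/gimage_gstart/gpath_ge0.
- by exists (gterm g); first exact/gimage_gterm/gpath_ge0.
Qed.

Lemma far_prefix_proj_le {g : gpath R X} {s : R} {q : X} :
  is_geodesic d g -> 0 <= s <= plen g ->
  (forall u : R, 0 <= u <= s -> C <= dist_pt d (Defs.pmap g u) (gimage p)) ->
  proj d (gimage p) (gstart g) q ->
  d (Defs.pmap g s) q <= dist_pt d (Defs.pmap g s) (gimage p) + C.
Proof.
move=> g_geodesic s_in far q_proj.
have prefix_geodesic := geodesic_prefix g_geodesic s_in.
have prefix_far : C <= dist_set d (gimage (Path s (Defs.pmap g))) (gimage p).
  apply: le_dist_set; [exact: gimage_neq0 prefix_geodesic
    | exact: gimage_neq0 p_geodesic | by move=> _ [u u_in ->]; apply: far].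
have [t _ qs_proj] := geodesic_proj p_geodesic (Defs.pmap g s).
have := contracting_proj_ends_le prefix_geodesic prefix_far q_proj qs_proj.
have := metric_triangle (Defs.pmap g s) (Defs.pmap p t) q.
by rewrite qs_proj.2 (metricC q); lra.
Qed.

Lemma contracting_entrance {g : gpath R X} {q : X} :
  is_geodesic d g -> proj d (gimage p) (gstart g) q ->
  dist_set d (gimage g) (gimage p) < C ->
  exists2 w, gimage g w & d w q <= 4 * C.
Proof.
(* [lra] does not use section hypotheses. *)
move=> g_geodesic q_proj near; have C_pos := C_gt0.
have [t0 [/andP[t0_ge0 t0_le] far entry]] :=
  first_entry g_geodesic (gimage_neq0 p_geodesic) C_gt0 near.
have before_t0 u : 0 <= u -> u <= t0 ->
    dist_pt d (Defs.pmap g u) (gimage p) < t0 - u + 2 * C.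
  move=> u_ge0 u_le; rewrite -(geodesic_dist g_geodesic) //.
  apply: le_lt_trans
    (dist_pt_triangle _ (Defs.pmap g t0) (gimage_neq0 p_geodesic)) _.
  by rewrite ltrD2l.
have [t0_lt | t0_ge] := ltrP t0 C.
  exists (gstart g); first exact/gimage_gstart/gpath_ge0.
  by rewrite q_proj.2 /gstart; have := before_t0 0 (lexx _) t0_ge0; lra.
exists (Defs.pmap g (t0 - C)).
  by apply: gimage_pmap; apply/andP; split; lra.
have prefix_far u : 0 <= u <= t0 - C ->
    C <= dist_pt d (Defs.pmap g u) (gimage p).
  by move=> /andP[u_ge0 u_le]; apply: far; lra.
have s_in : 0 <= t0 - C <= plen g by apply/andP; split; lra.
have := far_prefix_proj_le g_geodesic s_in prefix_far q_proj.
have := before_t0 (t0 - C); lra.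
Qed.

Lemma contracting_proj_lipschitz {y z qy qz : X} : geodesic_space d ->
  proj d (gimage p) y qy -> proj d (gimage p) z qz -> d qy qz <= d y z + 8 * C.
Proof.
move=> d_geodesic qy_proj qz_proj; have C_pos := C_gt0.
have [g [g_geodesic gy gz]] := d_geodesic y z; subst y z.
have [far | near] := leP C (dist_set d (gimage g) (gimage p)).
  have := contracting_proj_ends_le g_geodesic far qy_proj qz_proj.
  have := metric_ge0 (gstart g) (gterm g); lra.
have [w1 w1_g w1_qy] := contracting_entrance g_geodesic qy_proj near.
have [w2 w2_g w2_qz] : exists2 w, gimage g w & d w qz <= 4 * C.
  rewrite -gimage_rev; apply: contracting_entrance.
  - exact: rev_gpath_geodesic.
  - by rewrite gstart_rev.
  - by rewrite gimage_rev.
have := gimage_dist_le g_geodesic w1_g w2_g; rewrite -dist_gstart_gterm //.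
have := metric_triangle qy w1 qz; have := metric_triangle w1 w2 qz.
rewrite metricC in w1_qy; lra.
Qed.

Lemma dist_gimage_le_proj {g : gpath R X} {qs qt : X} x y : is_geodesic d g ->
  proj d (gimage p) (gstart g) qs -> proj d (gimage p) (gterm g) qt ->
  d x qs + C + d qt y < d x y -> dist_pt d x (gimage g) <= d x qs + 4 * C.
Proof.
move=> g_geodesic qs_proj qt_proj far_apart.
have [far | near] := leP C (dist_set d (gimage g) (gimage p)).
  have := contracting_proj_ends_le g_geodesic far qs_proj qt_proj.
  have := metric_triangle x qs y; have := metric_triangle qs qt y; lra.
have [w w_g w_qs] := contracting_entrance g_geodesic qs_proj near.
have := dist_pt_le x w w_g; have := metric_triangle x qs w.
rewrite (metricC qs); lra.
Qed.

Lemma fellow_travel_ends {beta : gpath R X} {a0 a1 a2 aL : X} {r M : R} :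
  geodesic_space d -> is_geodesic d beta ->
  between d a0 a1 a2 -> between d a1 a2 aL ->
  d a0 (gstart beta) <= M -> d aL (gterm beta) <= M ->
  d (gstart p) a1 <= r -> d (gterm p) a2 <= r ->
  8 * r + 2 * M + 18 * C <= plen p ->
  dist_pt d (gstart p) (gimage beta) <= 4 * r + M + 12 * C /\
  dist_pt d (gterm p) (gimage beta) <= 4 * r + M + 12 * C.
Proof.
move=> d_geodesic beta_geodesic a012 a12L a0_beta aL_beta x_a1 y_a2 p_long.
have C_pos := C_gt0.
have p_ge0 := gpath_ge0 p_geodesic.
have [u0 _ q0_proj] := geodesic_proj p_geodesic a0.
have [uL _ qL_proj] := geodesic_proj p_geodesic aL.
have [us _ qs_proj] := geodesic_proj p_geodesic (gstart beta).
have [ut _ qt_proj] := geodesic_proj p_geodesic (gterm beta).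
set q0 := Defs.pmap p u0 in q0_proj *; set qL := Defs.pmap p uL in qL_proj *.
set qs := Defs.pmap p us in qs_proj *; set qt := Defs.pmap p ut in qt_proj *.
have x_q0 : d (gstart p) q0 <= 4 * r.
  apply: between_proj_le a012 (between_gimage p_geodesic q0_proj.1) _ x_a1 y_a2.
  exact: proj_le q0_proj (gimage_gstart p_ge0).
have y_qL : d (gterm p) qL <= 4 * r.
  apply: between_proj_le (between_sym a12L) _ _ y_a2 x_a1.
  - exact/between_sym/between_gimage/qL_proj.1.
  - exact: proj_le qL_proj (gimage_gterm p_ge0).
have x_qs : d (gstart p) qs <= 4 * r + M + 8 * C.
  have := contracting_proj_lipschitz d_geodesic q0_proj qs_proj.
  have := metric_triangle (gstart p) q0 qs; lra.
have qt_y : d qt (gterm p) <= 4 * r + M + 8 * C.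
  have := contracting_proj_lipschitz d_geodesic qt_proj qL_proj.
  have := metric_triangle qt qL (gterm p).
  rewrite (metricC qL) (metricC (gterm beta)); lra.
have := dist_gstart_gterm p_geodesic; split.
- apply: le_trans (dist_gimage_le_proj (gstart p) (gterm p) beta_geodesic
    qs_proj qt_proj _) _; lra.
- rewrite -gimage_rev.
  apply: le_trans (dist_gimage_le_proj (qs := qt) (qt := qs)
    (gterm p) (gstart p) (rev_gpath_geodesic beta_geodesic) _ _ _) _.
  + by rewrite gstart_rev.
  + by rewrite gterm_rev.
  + rewrite (metricC (gterm p) (gstart p)) (metricC qs) (metricC (gterm p)).
    lra.
  + rewrite metricC; lra.
Qed.

End Contracting.

End Metric.

Theorem lemma2p23 (R : realType) (X : Type) (d : X -> X -> R) :
  is_metric d -> proper_space d -> geodesic_space d ->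
  forall r C M : R, 0 < C -> C <= r -> 0 < M ->
  exists rhat L0 : R, [/\ 0 < rhat, 0 < L0 &
    forall alpha beta p : gpath R X,
      is_geodesic d alpha -> is_geodesic d beta ->
      d (gstart alpha) (gstart beta) <= M -> d (gterm alpha) (gterm beta) <= M ->
      is_geodesic d p -> contracting d C (gimage p) -> L0 <= plen p ->
      dist_pt d (gstart p) (gimage alpha) <= r ->
      dist_pt d (gterm p) (gimage alpha) <= r ->
      dist_pt d (gstart p) (gimage beta) <= rhat /\
      dist_pt d (gterm p) (gimage beta) <= rhat].
Proof.
move=> d_metric _ d_geodesic r C M C_gt0 C_le_r M_gt0.
exists (4 * r + M + 12 * C), (8 * r + 2 * M + 18 * C); split; [lra | lra |].
move=> alpha beta p alpha_geo beta_geo start_M term_M p_geo p_contr p_long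
  x_alpha y_alpha.
have [t1 /andP[t1_ge0 t1_le] [_ alpha_t1]] :=
  geodesic_proj d_metric alpha_geo (gstart p).
have [t2 /andP[t2_ge0 t2_le] [_ alpha_t2]] :=
  geodesic_proj d_metric alpha_geo (gterm p).
rewrite -alpha_t1 in x_alpha; rewrite -alpha_t2 in y_alpha.
have [t12 | t21] := leP t1 t2.
  apply: (fellow_travel_ends d_metric C_gt0 p_geo p_contr d_geodesic beta_geo
    _ _ start_M term_M x_alpha y_alpha p_long); exact: geodesic_between.
rewrite -(gimage_rev beta).
apply: (fellow_travel_ends d_metric C_gt0 p_geo p_contr (a0 := gterm alpha)
  (aL := gstart alpha) d_geodesic (rev_gpath_geodesic beta_geo) _ _ _ _
  x_alpha y_alpha p_long).
- by apply/between_sym/geodesic_between => //; lra.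
- by apply/between_sym/geodesic_between => //; lra.
- by rewrite gstart_rev.
- by rewrite gterm_rev.
Qed.
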